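(* Let $n\ge 1$ and let $\mathbf{A},\mathbf{B}\in\mathbb{R}^{n\times n}$ be non-singular diagonalizable matrices such that: (i) $\mathbf{A}^q=a\mathbf{I}$ for some positive integer $q\le n$ and some scalar $a\neq 0$; (ii) $\mathbf{I}-a\mathbf{B}^q$ is nonsingular; (iii) the eigenvalues of $\mathbf{B}$ have pairwise distinct absolute values. Define $$S_{\mathbf{A},\mathbf{B}}=\{\mathbf{M}\in\mathbb{R}^{n\times n}\;:\;\exists\,\mathbf{g},\mathbf{h}\in\mathbb{R}^n \text{ with } \mathbf{M}-\mathbf{A}\mathbf{M}\mathbf{B}=\mathbf{g}\mathbf{h}^T\}.$$ Then for every vector $\mathbf{v}\in\mathbb{R}^n$ there exist a matrix $\mathbf{M}\in S_{\mathbf{A},\mathbf{B}}$ and an index $i\in\{1,\dots,n\}$ such that the $i$-th column of $\mathbf{M}$ equals $\mathbf{v}$.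
   Context: For $\mathbf{A},\mathbf{B}\in\mathbb{R}^{n\times n}$, the Stein displacement of $\mathbf{M}\in\mathbb{R}^{n\times n}$ is $\Delta_{\mathbf{A},\mathbf{B}}(\mathbf{M})=\mathbf{M}-\mathbf{A}\mathbf{M}\mathbf{B}$; $S_{\mathbf{A},\mathbf{B}}$ is the set of matrices whose Stein displacement is of the form $\mathbf{g}\mathbf{h}^T$ (rank at most one). *)

From HB Require Import structures.
From mathcomp Require Import all_boot all_order all_algebra.
From mathcomp Require Import complex.
Set Implicit Arguments. Unset Strict Implicit. Unset Printing Implicit Defensive.
Import Order.TTheory GRing.Theory Num.Theory.
Local Open Scope ring_scope.

(* Real matrices are modeled over an arbitrary real closed field R;
   eigenvalues / diagonalizability are taken over the complexification R[i]. *)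

Definition mxC (R : rcfType) (m n : nat) (M : 'M[R]_(m, n)) : 'M[R[i]]_(m, n) :=
  map_mx (fun x : R => (x%:C)%C) M.

Definition stein_disp (R : rcfType) (n : nat) (A B M : 'M[R]_n) : 'M[R]_n :=
  M - A *m M *m B.

Definition in_S (R : rcfType) (n : nat) (A B M : 'M[R]_n) : Prop :=
  exists g h : 'cV[R]_n, stein_disp A B M = g *m h^T.

Definition eig_distinct_abs (R : rcfType) (n : nat) (B : 'M[R]_n) : Prop :=
  exists s : 'I_n -> R[i],
    char_poly (mxC B) = \prod_(k < n) ('X - (s k)%:P) /\
    (forall k l : 'I_n, k != l -> `|s k| != `|s l|).

From HB Require Import structures.
From mathcomp Require Import all_boot all_order all_algebra.
From mathcomp Require Import complex.
Set Implicit Arguments. Unset Strict Implicit. Unset Printing Implicit Defensive.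
Import Order.TTheory GRing.Theory Num.Theory.
Local Open Scope ring_scope.

(* Only hypothesis (iii) is needed.  The conjugate of a root of the real
   characteristic polynomial of B is again a root of the same modulus, so
   distinct moduli force every eigenvalue of B to be real.  A real left
   eigenvector w (w B = r w), normalised so that w_i = 1, then gives the
   rank-one matrix M = v w: its i-th column is v, and
   M - A M B = (v - r A v) w. *)

Section RealEigenvalue.

Variable R : rcfType.

Lemma root_map_complex_conj (p : {poly R}) (z : R[i]) :
  root (map_poly (real_complex R) p) z ->
  root (map_poly (real_complex R) p) (z^*)%C.
Proof.
rewrite -complex_root_conj -map_poly_comp.
by congr (root _ _); apply: eq_map_poly => x /=; rewrite oppr0.
Qed.

Lemma conjc_fixed_real (z : R[i]) : (z^*)%C = z -> exists r : R, z = r%:C%C.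
Proof.
case: z => a b [/eqP]; rewrite eq_sym -subr_eq0 opprK -mulr2n mulrn_eq0 /=.
by move=> /eqP ->; exists a.
Qed.

Lemma real_root_of_roots_distinct_norm (p : {poly R}) (n : nat)
    (s : 'I_n -> R[i]) :
  (0 < n)%N ->
  map_poly (real_complex R) p = \prod_(k < n) ('X - (s k)%:P) ->
  (forall k l : 'I_n, k != l -> `|s k| != `|s l|) ->
  exists r : R, root p r.
Proof.
move=> n_gt0 p_split s_norm_inj; set k0 := Ordinal n_gt0.
have rootsP z : root (map_poly (real_complex R) p) z -> exists k, z = s k.
  rewrite p_split rootE horner_prod => /prodf_eq0 [k _].
  by rewrite hornerXsubC subr_eq0 => /eqP ->; exists k.
have root_s : root (map_poly (real_complex R) p) (s k0).
  rewrite p_split rootE horner_prod; apply/prodf_eq0; exists k0 => //.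
  by rewrite hornerXsubC subrr.
have [l conj_s] : exists l, (s k0)^*%C = s l.
  by apply/rootsP/root_map_complex_conj.
have l_k0 : l = k0.
  apply/eqP; apply: contraTT isT => /s_norm_inj.
  by rewrite -conj_s normcJ eqxx.
have [r s_k0_real] : exists r : R, s k0 = r%:C%C.
  by apply: conjc_fixed_real; rewrite conj_s l_k0.
by exists r; move: root_s; rewrite s_k0_real fmorph_root.
Qed.

Lemma eig_distinct_abs_real_eigenvalue (n : nat) (B : 'M[R]_n) :
  (0 < n)%N -> eig_distinct_abs B -> exists r : R, eigenvalue B r.
Proof.
move=> n_gt0 [s [B_split s_norm_inj]].
have [r r_root] : exists r : R, root (char_poly B) r.
  apply: real_root_of_roots_distinct_norm n_gt0 _ s_norm_inj.
  by rewrite map_char_poly.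
by exists r; rewrite eigenvalue_root_char.
Qed.

End RealEigenvalue.

Lemma eigenvalue_normalized_left_eigenvector (F : fieldType) (n : nat)
    (B : 'M[F]_n) (r : F) :
  eigenvalue B r -> exists w : 'rV_n, exists i : 'I_n, w *m B = r *: w /\ w 0 i = 1.
Proof.
move=> /eigenvalueP [w wB /rV0Pn [i wi_neq0]].
exists ((w 0 i)^-1 *: w), i; split.
  by rewrite -scalemxAl wB !scalerA mulrC.
by rewrite mxE mulVf.
Qed.

Lemma col_mul_row (K : comPzRingType) (n : nat) (v : 'cV[K]_n) (w : 'rV[K]_n)
    (i : 'I_n) :
  col i (v *m w) = w 0 i *: v.
Proof.
by apply/matrixP => x y; rewrite ord1 !mxE big_ord1 mulrC.
Qed.

Lemma stein_disp_left_eigenvector (R : rcfType) (n : nat) (A B : 'M[R]_n)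
    (v : 'cV_n) (w : 'rV_n) (r : R) :
  w *m B = r *: w -> stein_disp A B (v *m w) = (v - r *: (A *m v)) *m w.
Proof.
move=> wB; rewrite /stein_disp mulmxBl -!mulmxA wB -!scalemxAr -scalemxAl.
by rewrite mulmxA.
Qed.

Theorem theorem1 (R : rcfType) (n : nat) (A B : 'M[R]_n) (q : nat) (a : R) :
  (0 < n)%N ->
  A \in unitmx -> B \in unitmx ->
  diagonalizable (mxC A) -> diagonalizable (mxC B) ->
  (0 < q <= n)%N -> a != 0 -> A ^+ q = a%:M ->
  (1%:M - a *: B ^+ q) \in unitmx ->
  eig_distinct_abs B ->
  forall v : 'cV[R]_n, exists M : 'M[R]_n, in_S A B M /\ exists i : 'I_n, col i M = v.
Proof.
move=> n_gt0 _ _ _ _ _ _ _ _ B_eig v.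
have [r r_eig] := eig_distinct_abs_real_eigenvalue n_gt0 B_eig.
have [w [i [wB wi1]]] := eigenvalue_normalized_left_eigenvector r_eig.
exists (v *m w); split; last by exists i; rewrite col_mul_row wi1 scale1r.
by exists (v - r *: (A *m v)), w^T; rewrite trmxK (stein_disp_left_eigenvector _ _ wB).
Qed.
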